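(* Let $k\ge6$, $0<\theta<\frac{k^2-6k+1}{(k+1)^2}$, and let $$s^\pm=\frac{k-3-(k+1)\theta\pm\sqrt{(1-\theta)[k^2-6k+1-(k+1)^2\theta]}}{4(1+\theta)},\qquad \lambda^\pm=s^\pm\Bigl(\frac{1+2s^\pm}{1+(1+\theta)s^\pm}\Bigr)^k.$$ If $\lambda\in(\lambda^-,\lambda^+)$, then with $\phi(x)=\lambda\bigl(\frac{1+(1+\theta)x}{1+2x}\bigr)^k$ the system $z=\phi(t)$, $t=\phi(z)$ has at least three solutions in $(0,\infty)^2$, namely $(x_*,x_* )$, $(x_0,x_1)$, $(x_1,x_0)$ with $x_0\ne x_1$, where $x_*$ is the unique positive fixed point of $\phi$. Consequently there are at least three 2-periodic splitting Gibbs measures of the SCWR model.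
   Context: SCWR model on the Cayley tree of order $k$, spins $\{-1,0,1\}$, activity $\lambda>0$, $\theta=e^{-J\beta}\in(0,1)$. Splitting Gibbs measures correspond to positive solutions $(z_{1,i},z_{2,i})_{i}$ of $z_{1,i}=\lambda\prod_{j\in S(i)}\frac{1+z_{1,j}+\theta z_{2,j}}{1+z_{1,j}+z_{2,j}}$, $z_{2,i}=\lambda\prod_{j\in S(i)}\frac{1+z_{2,j}+\theta z_{1,j}}{1+z_{1,j}+z_{2,j}}$ ($S(i)$ the $k$ direct successors of $i$). A 2-periodic splitting Gibbs measure is one whose solution takes a value $(z_1,z_2)$ on all vertices at even distance from the root and a value $(t_1,t_2)$ on all vertices at odd distance; the solutions considered here have $z_1=z_2=z$ and $t_1=t_2=t$, in which case the equations reduce to $z=\phi(t)$, $t=\phi(z)$. *)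

From Stdlib Require Import Reals.
Open Scope R_scope.

Definition phi (k : nat) (theta lambda x : R) : R :=
  lambda * ((1 + (1 + theta) * x) / (1 + 2 * x)) ^ k.

Definition s_pm (k : nat) (theta sign : R) : R :=
  (INR k - 3 - (INR k + 1) * theta
     + sign * sqrt ((1 - theta) * (INR k ^ 2 - 6 * INR k + 1 - (INR k + 1) ^ 2 * theta)))
  / (4 * (1 + theta)).

Definition lambda_pm (k : nat) (theta sign : R) : R :=
  let s := s_pm k theta sign in
  s * ((1 + 2 * s) / (1 + (1 + theta) * s)) ^ k.

(* 2-periodic solution of the SCWR splitting-Gibbs-measure equations on the
   Cayley tree of order k: value (z1,z2) at even distance, (t1,t2) at odd
   distance; each vertex has k successors at the other parity. *)
Definition scwr_2periodic (k : nat) (theta lambda z1 z2 t1 t2 : R) : Prop :=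
  0 < z1 /\ 0 < z2 /\ 0 < t1 /\ 0 < t2 /\
  z1 = lambda * ((1 + t1 + theta * t2) / (1 + t1 + t2)) ^ k /\
  z2 = lambda * ((1 + t2 + theta * t1) / (1 + t1 + t2)) ^ k /\
  t1 = lambda * ((1 + z1 + theta * z2) / (1 + z1 + z2)) ^ k /\
  t2 = lambda * ((1 + z2 + theta * z1) / (1 + z1 + z2)) ^ k.

(* The map phi is positive and strictly decreasing on [0, oo) with phi < lambda,
   so it has a unique positive fixed point xs.  Solving phi x = x for lambda
   gives the increasing function lambda = x ((1 + 2x) / (1 + (1 + theta) x))^k,
   hence lambda_- < lambda < lambda_+ places xs strictly between the roots
   s_- < s_+ of 2 (1 + theta) s^2 - (k - 3 - (k + 1) theta) s + 1; there this
   quadratic is negative, which says exactly that phi'(xs) < -1.  The fixed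
   point is then repelling for phi o phi: h = phi o phi - id vanishes at xs
   with h'(xs) = phi'(xs)^2 - 1 > 0, while h(lambda) < 0, so h has a zero z in
   (xs, lambda).  It is not a fixed point of phi, so (z, phi z) is a genuine
   2-cycle. *)

From Stdlib Require Import Reals Lra Lia Ranalysis5.
From Coquelicot Require Import Coquelicot.
Open Scope R_scope.

Lemma pow_lt_pow_l (a b : R) (n : nat) : 0 <= a < b -> (0 < n)%nat -> a ^ n < b ^ n.
Proof.
  intros Hab Hn; destruct n as [|n]; [lia|]; clear Hn.
  induction n as [|n IH]; [simpl; lra|].
  change (a * a ^ S n < b * b ^ S n).
  assert (0 <= a ^ S n) by (apply pow_le; lra); nra.
Qed.

Lemma is_derive_continuity_pt (f : R -> R) (x d : R) :
  is_derive f x d -> continuity_pt f x.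
Proof.
  intros Hf; apply derivable_continuous_pt; exists d; now apply is_derive_Reals.
Qed.

Lemma is_derive_pos_right (g : R -> R) (x d b : R) :
  is_derive g x d -> g x = 0 -> 0 < d -> 0 < b ->
  exists y, x < y < x + b /\ 0 < g y.
Proof.
  intros Hg Hgx Hd Hb.
  apply is_derive_Reals in Hg.
  destruct (Hg d Hd) as [[delta Hdelta_pos] Hdelta]; simpl in Hdelta.
  set (e := Rmin (delta / 2) (b / 2)).
  assert (He : 0 < e) by (apply Rmin_glb_lt; lra).
  assert (He_delta : e <= delta / 2) by apply Rmin_l.
  assert (He_b : e <= b / 2) by apply Rmin_r.
  exists (x + e); split; [lra|].
  specialize (Hdelta e ltac:(lra) ltac:(rewrite Rabs_right; lra)).
  rewrite Hgx, Rminus_0_r in Hdelta.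
  apply Rabs_def2 in Hdelta as [_ Hquot].
  replace (g (x + e)) with (g (x + e) / e * e) by (field; lra).
  apply Rmult_lt_0_compat; lra.
Qed.

Definition ratio (theta x : R) : R := (1 + (1 + theta) * x) / (1 + 2 * x).

Lemma ratio_pos (theta x : R) : 0 < theta -> 0 <= x -> 0 < ratio theta x.
Proof.
  intros; unfold ratio, Rdiv.
  apply Rmult_lt_0_compat; [nra | apply Rinv_0_lt_compat; lra].
Qed.

Lemma ratio_lt_1 (theta x : R) : theta < 1 -> 0 < x -> ratio theta x < 1.
Proof.
  intros; unfold ratio; apply Rlt_div_l; nra.
Qed.

Lemma ratio_decreasing (theta a b : R) :
  theta < 1 -> 0 <= a < b -> ratio theta b < ratio theta a.
Proof.
  intros; apply Rlt_0_minus; unfold ratio.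
  replace ((1 + (1 + theta) * a) / (1 + 2 * a) - (1 + (1 + theta) * b) / (1 + 2 * b))
    with ((1 - theta) * (b - a) / ((1 + 2 * a) * (1 + 2 * b))) by (field; lra).
  unfold Rdiv; apply Rmult_lt_0_compat; [nra | apply Rinv_0_lt_compat; nra].
Qed.

Lemma is_derive_phi (k : nat) (theta lambda x : R) : 1 + 2 * x <> 0 ->
  is_derive (phi k theta lambda) x
    (lambda * (INR k * ratio theta x ^ pred k * ((theta - 1) / (1 + 2 * x) ^ 2))).
Proof.
  intros Hx; unfold phi, ratio; auto_derive; [auto|].
  unfold Rdiv; set (P := ((1 + (1 + theta) * x) * / (1 + 2 * x)) ^ pred k).
  field; auto.
Qed.

Definition fixpoint_activity (k : nat) (theta x : R) : R :=
  x * ((1 + 2 * x) / (1 + (1 + theta) * x)) ^ k.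

Lemma lambda_pm_fixpoint_activity (k : nat) (theta sign : R) :
  lambda_pm k theta sign = fixpoint_activity k theta (s_pm k theta sign).
Proof. reflexivity. Qed.

Lemma fixpoint_activity_le (k : nat) (theta a b : R) :
  0 < theta < 1 -> 0 < a <= b -> fixpoint_activity k theta a <= fixpoint_activity k theta b.
Proof.
  intros Ht Hab; unfold fixpoint_activity.
  set (qa := (1 + 2 * a) / (1 + (1 + theta) * a)).
  set (qb := (1 + 2 * b) / (1 + (1 + theta) * b)).
  assert (Hqa : 0 < qa)
    by (unfold qa, Rdiv; apply Rmult_lt_0_compat; [nra | apply Rinv_0_lt_compat; nra]).
  assert (Hpa : 0 < 1 + (1 + theta) * a) by nra.
  assert (Hpb : 0 < 1 + (1 + theta) * b) by nra.
  assert (Hq : qa <= qb).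
  { apply Rminus_le_0; unfold qa, qb.
    replace ((1 + 2 * b) / (1 + (1 + theta) * b) - (1 + 2 * a) / (1 + (1 + theta) * a))
      with ((1 - theta) * (b - a) / ((1 + (1 + theta) * a) * (1 + (1 + theta) * b)))
      by (field; lra).
    apply Rdiv_le_0_compat; [nra | now apply Rmult_lt_0_compat]. }
  assert (0 < qa ^ k) by (now apply pow_lt).
  assert (qa ^ k <= qb ^ k) by (apply pow_incr; lra).
  nra.
Qed.

Lemma fixpoint_activity_pos (k : nat) (theta x : R) :
  0 < theta -> 0 < x -> 0 < fixpoint_activity k theta x.
Proof.
  intros; apply Rmult_lt_0_compat; [lra|].
  apply pow_lt, Rdiv_lt_0_compat; nra.
Qed.

Lemma fixpoint_activity_lt_reflect (k : nat) (theta a b : R) :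
  0 < theta < 1 -> 0 < b -> fixpoint_activity k theta a < fixpoint_activity k theta b -> a < b.
Proof.
  intros Ht Hb Hab; apply Rnot_le_lt; intros Hba.
  pose proof (fixpoint_activity_le k theta b a Ht (conj Hb Hba)); lra.
Qed.

Section Phi.

Variables (k : nat) (theta lambda : R).
Hypotheses (Hk : (1 <= k)%nat) (Htheta : 0 < theta < 1) (Hlambda : 0 < lambda).
Local Set Default Proof Using "All".

Let f := phi k theta lambda.

Lemma phi_pos (x : R) : 0 <= x -> 0 < f x.
Proof.
  intros; apply Rmult_lt_0_compat; [lra | apply pow_lt, ratio_pos; lra].
Qed.

Lemma phi_lt_lambda (x : R) : 0 < x -> f x < lambda.
Proof.
  intros Hx; unfold f, phi; fold (ratio theta x).
  assert (ratio theta x ^ k < 1).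
  { apply pow_lt_1_compat; [split; [left; apply ratio_pos | apply ratio_lt_1] | ]; lra || lia. }
  nra.
Qed.

Lemma phi_decreasing (a b : R) : 0 <= a < b -> f b < f a.
Proof.
  intros Hab; unfold f, phi; fold (ratio theta a) (ratio theta b).
  apply Rmult_lt_compat_l; [lra|].
  apply pow_lt_pow_l; [split; [left; apply ratio_pos | apply ratio_decreasing] | ]; lra || lia.
Qed.

Lemma phi_continuity_pt (x : R) : 0 <= x -> continuity_pt f x.
Proof.
  intros; eapply is_derive_continuity_pt, is_derive_phi; lra.
Qed.

Lemma phi_unique_fixpoint :
  exists xs, 0 < xs < lambda /\ f xs = xs /\ forall y, 0 < y -> f y = y -> y = xs.
Proof.
  destruct (IVT_interv (fun x => x - f x) 0 lambda) as [xs [Hxs Hfix]].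
  - intros a Ha; apply continuity_pt_minus;
      [apply derivable_continuous_pt, derivable_pt_id | apply phi_continuity_pt; lra].
  - exact Hlambda.
  - pose proof (phi_pos 0 (Rle_refl 0)); lra.
  - pose proof (phi_lt_lambda lambda Hlambda); lra.
  - assert (Hxs_fix : f xs = xs) by lra.
    assert (Hxs_pos : 0 < xs) by (rewrite <- Hxs_fix; apply phi_pos; lra).
    exists xs; split; [split; [lra | rewrite <- Hxs_fix; now apply phi_lt_lambda] |].
    split; [exact Hxs_fix|].
    intros y Hy Hfy; destruct (Rtotal_order y xs) as [Hlt | [Heq | Hgt]]; auto.
    + pose proof (phi_decreasing y xs ltac:(lra)); lra.
    + pose proof (phi_decreasing xs y ltac:(lra)); lra.
Qed.

Lemma fixpoint_activity_of_fixpoint (x : R) :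
  0 <= x -> f x = x -> fixpoint_activity k theta x = lambda.
Proof.
  intros Hx Hfx; unfold fixpoint_activity.
  rewrite <- Hfx at 1; unfold f, phi.
  rewrite Rmult_assoc, <- Rpow_mult_distr.
  replace ((1 + (1 + theta) * x) / (1 + 2 * x) * ((1 + 2 * x) / (1 + (1 + theta) * x)))
    with 1 by (field; split; nra).
  rewrite pow1; ring.
Qed.

Lemma phi_derive_at_fixpoint (x : R) : 0 <= x -> f x = x ->
  is_derive f x (- (INR k * x * (1 - theta) / ((1 + 2 * x) * (1 + (1 + theta) * x)))).
Proof.
  intros Hx Hfx.
  replace (- _) with
    (lambda * (INR k * ratio theta x ^ pred k * ((theta - 1) / (1 + 2 * x) ^ 2))).
  { apply is_derive_phi; lra. }
  assert (Hr : 0 < ratio theta x) by (apply ratio_pos; lra).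
  assert (Hpow : lambda * ratio theta x ^ pred k = x / ratio theta x).
  { destruct k as [|m]; [lia|]; unfold f, phi in Hfx; fold (ratio theta x) in Hfx.
    simpl pred; simpl in Hfx; revert Hfx Hr.
    generalize (ratio theta x ^ m) (ratio theta x); intros P r Hfx Hr.
    rewrite <- Hfx; field; lra. }
  replace (lambda * (INR k * ratio theta x ^ pred k * ((theta - 1) / (1 + 2 * x) ^ 2)))
    with (INR k * (lambda * ratio theta x ^ pred k) * ((theta - 1) / (1 + 2 * x) ^ 2))
    by ring.
  rewrite Hpow; unfold ratio; field; split; nra.
Qed.

Lemma phi_two_cycle_of_repelling_fixpoint (xs d : R) :
  0 < xs -> f xs = xs -> is_derive f xs d -> d < -1 ->
  exists z, xs < z < lambda /\ f (f z) = z.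
Proof.
  intros Hxs Hfix Hd Hd1.
  set (h := fun y => f (f y) - y).
  assert (Hh_derive : is_derive h xs (d * d - 1)).
  { pose proof (is_derive_comp f f xs d d ltac:(now rewrite Hfix) Hd) as Hff.
    exact (is_derive_minus _ _ xs _ _ Hff (is_derive_id xs)). }
  assert (Hxs_lambda : xs < lambda) by (rewrite <- Hfix at 1; now apply phi_lt_lambda).
  destruct (is_derive_pos_right h xs (d * d - 1) (lambda - xs)) as [y [Hy Hhy]];
    [exact Hh_derive | unfold h; rewrite !Hfix; ring | nra | lra |].
  assert (Hh_lambda : h lambda < 0).
  { unfold h; pose proof (phi_lt_lambda (f lambda) (phi_pos lambda ltac:(lra))); lra. }
  destruct (IVT_interv (fun x => - h x) y lambda) as [z [Hz Hhz]]; [| lra | lra | lra |].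
  - intros a Ha; apply continuity_pt_opp; unfold h.
    apply continuity_pt_minus; [| apply derivable_continuous_pt, derivable_pt_id].
    apply (continuity_pt_comp f f); apply phi_continuity_pt; [lra |].
    left; apply phi_pos; lra.
  - cbv beta in Hhz.
    assert (Hz_lambda : z <> lambda) by (intros ->; lra).
    exists z; split; [lra | unfold h in Hhz; lra].
Qed.

End Phi.

Section Roots.

Variables (k : nat) (theta : R).
Hypotheses (Hk : (6 <= k)%nat) (Htheta : 0 < theta)
  (Htheta_bound : theta < (INR k ^ 2 - 6 * INR k + 1) / (INR k + 1) ^ 2).
Local Set Default Proof Using "All".

Lemma theta_lt_1 : theta < 1.
Proof.
  assert (HK : 6 <= INR k) by (replace 6 with (INR 6) by (simpl; ring); now apply le_INR).
  apply (Rlt_trans _ _ _ Htheta_bound); apply Rlt_div_l; nra.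
Qed.

Lemma s_pm_spec :
  0 < s_pm k theta (-1) < s_pm k theta 1 /\
  forall x, s_pm k theta (-1) < x < s_pm k theta 1 ->
    2 * (1 + theta) * x ^ 2 - (INR k - 3 - (INR k + 1) * theta) * x + 1 < 0.
Proof.
  set (K := INR k).
  assert (HK : 6 <= K) by (unfold K; replace 6 with (INR 6) by (simpl; ring); now apply le_INR).
  assert (HQ0 : theta * (K + 1) ^ 2 < K ^ 2 - 6 * K + 1).
  { apply (Rlt_div_r theta _ ((K + 1) ^ 2)); [nra | exact Htheta_bound]. }
  set (A := K - 3 - (K + 1) * theta).
  set (Q := (1 - theta) * (K ^ 2 - 6 * K + 1 - (K + 1) ^ 2 * theta)).
  set (S := sqrt Q).
  pose proof theta_lt_1 as Ht1.
  assert (HQ : 0 < Q) by (unfold Q; nra).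
  assert (HSS : S * S = Q) by (apply sqrt_sqrt; lra).
  assert (HS : 0 < S) by (now apply sqrt_lt_R0).
  assert (HA : 0 < A) by (unfold A; nra).
  (* s_+ and s_- are the roots (A +/- S) / (4 (1 + theta)) of this quadratic *)
  assert (HAQ : A * A - Q = 8 * (1 + theta)) by (unfold A, Q; ring).
  assert (HSA : S < A) by nra.
  assert (Hm : s_pm k theta (-1) = (A - S) / (4 * (1 + theta)))
    by (unfold s_pm; fold K Q S A; field; lra).
  assert (Hp : s_pm k theta 1 = (A + S) / (4 * (1 + theta)))
    by (unfold s_pm; fold K Q S A; field; lra).
  rewrite Hm, Hp; split.
  - split; [apply Rdiv_lt_0_compat | apply Rmult_lt_compat_r; [apply Rinv_0_lt_compat |]]; lra.
  - intros x [Hxm Hxp].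
    apply Rlt_div_l in Hxm; [| lra].
    apply Rlt_div_r in Hxp; [| lra].
    assert ((4 * (1 + theta) * x - A) * (4 * (1 + theta) * x - A) < Q) by nra.
    fold K A; nra.
Qed.

End Roots.

Lemma scwr_2periodic_of_phi (k : nat) (theta lambda z w : R) :
  0 < z -> 0 < w -> z = phi k theta lambda w -> w = phi k theta lambda z ->
  scwr_2periodic k theta lambda z z w w.
Proof.
  unfold phi, scwr_2periodic; intros.
  replace (1 + w + theta * w) with (1 + (1 + theta) * w) by ring.
  replace (1 + w + w) with (1 + 2 * w) by ring.
  replace (1 + z + theta * z) with (1 + (1 + theta) * z) by ring.
  replace (1 + z + z) with (1 + 2 * z) by ring.
  tauto.
Qed.

Theorem mainTheorem18 (k : nat) (theta lambda : R) :
  (6 <= k)%nat ->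
  0 < theta ->
  theta < (INR k ^ 2 - 6 * INR k + 1) / (INR k + 1) ^ 2 ->
  lambda_pm k theta (-1) < lambda ->
  lambda < lambda_pm k theta 1 ->
  exists xs x0 x1 : R,
    (* x_* is the unique positive fixed point of phi *)
    (0 < xs /\ phi k theta lambda xs = xs /\
     forall y, 0 < y -> phi k theta lambda y = y -> y = xs) /\
    (* (x0,x1) and (x1,x0) are positive solutions of z = phi t, t = phi z *)
    0 < x0 /\ 0 < x1 /\ x0 <> x1 /\
    x0 = phi k theta lambda x1 /\ x1 = phi k theta lambda x0 /\
    (* hence three distinct 2-periodic solutions of the SCWR equations *)
    scwr_2periodic k theta lambda xs xs xs xs /\
    scwr_2periodic k theta lambda x0 x0 x1 x1 /\
    scwr_2periodic k theta lambda x1 x1 x0 x0.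
Proof.
  intros Hk Ht Htb Hlm Hlp.
  rewrite lambda_pm_fixpoint_activity in Hlm, Hlp.
  pose proof (theta_lt_1 k theta Hk Ht Htb) as Ht1.
  destruct (s_pm_spec k theta Hk Ht Htb) as [[Hsm Hsp] Hquad].
  assert (Hk1 : (1 <= k)%nat) by lia.
  assert (Htheta : 0 < theta < 1) by lra.
  assert (Hl : 0 < lambda) by (pose proof (fixpoint_activity_pos k theta _ Ht Hsm); lra).
  destruct (phi_unique_fixpoint k theta lambda Hk1 Htheta Hl) as [xs [Hxs [Hfix Huniq]]].
  pose proof (fixpoint_activity_of_fixpoint k theta lambda Hk1 Htheta Hl xs ltac:(lra) Hfix).
  assert (Hxs_between : s_pm k theta (-1) < xs < s_pm k theta 1).
  { split; apply (fixpoint_activity_lt_reflect k theta); lra. }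
  pose proof (phi_derive_at_fixpoint k theta lambda Hk1 Htheta Hl xs ltac:(lra) Hfix) as Hderive.
  assert (Hrepel : - (INR k * xs * (1 - theta) / ((1 + 2 * xs) * (1 + (1 + theta) * xs))) < -1).
  { enough (1 < INR k * xs * (1 - theta) / ((1 + 2 * xs) * (1 + (1 + theta) * xs))) by lra.
    apply Rlt_div_r; [apply Rmult_lt_0_compat; nra |].
    specialize (Hquad xs Hxs_between); nra. }
  destruct (phi_two_cycle_of_repelling_fixpoint k theta lambda Hk1 Htheta Hl xs _
              (proj1 Hxs) Hfix Hderive Hrepel) as [z [Hz Hzz]].
  set (f := phi k theta lambda) in *.
  assert (Hfz : 0 < f z) by (apply (phi_pos k theta lambda Hk1 Htheta Hl); lra).
  assert (Hne : z <> f z) by (intros E; assert (z = xs) by (apply Huniq; lra); lra).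
  exists xs, z, (f z).
  split; [repeat split; assumption || lra |].
  do 5 (split; [assumption || lra |]).
  split; [| split]; apply scwr_2periodic_of_phi; fold f; lra.
Qed.
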